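(* Let $G$ be a graph containing no induced triangle and no induced path on $5$ vertices. Then $\operatorname{reg}(G)$ equals the maximum, over all families $\{H_1,\dots,H_r\}$ of pairwise vertex-disjoint induced subgraphs of $G$ each isomorphic to $K_2$ or to the $5$-cycle $C_5$ and with no edges of $G$ between distinct $H_i$, of $(\#\{i:H_i\cong K_2\})+2(\#\{i:H_i\cong C_5\})$ (the empty family giving $0$).
   Context: $\operatorname{reg}(G)=\max\{j\ge0:\widetilde H_{j-1}(\operatorname{Ind}(G[S]);\Bbbk)\neq0\text{ for some }S\subseteq V(G)\}$ over a field $\Bbbk$, where $\operatorname{Ind}$ is the independence complex (regularity of $R/I(G)$ for the edge ideal). *)

From HB Require Import structures.
From mathcomp Require Import all_boot all_order all_algebra.
Set Implicit Arguments. Unset Strict Implicit. Unset Printing Implicit Defensive.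
Import GRing.Theory.

(* A finite simple graph: vertex type T (finType), adjacency e : rel T,
   assumed symmetric and irreflexive in the theorem. *)

Section Graphs.
Variable T : finType.
Variable e : rel T.

Definition indep (A : {set T}) : bool :=
  [forall x in A, forall y in A, ~~ e x y].

(* faces of Ind(G[S]) with exactly j vertices (dimension j-1);
   the empty face (j = 0) is included, so homology is reduced. *)
Definition faces (S : {set T}) (j : nat) : {set {set T}} :=
  [set A : {set T} | [&& A \subset S, indep A & #|A| == j]].

Variable F : fieldType.

(* Simplicial boundary map C_{j} -> C_{j-1}, from faces with j.+1 vertices
   to faces with j vertices; vertices ordered by enum_rank; sign (-1)^pos. *)
Definition bd (S : {set T}) (j : nat) : 'M[F]_(#|faces S j.+1|, #|faces S j|) :=
  \matrix_(i, k)
    (\sum_(v in (enum_val i : {set T}) | enum_val k == (enum_val i) :\ v)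
        (-1) ^+ #|[set u in (enum_val i : {set T}) | (enum_rank u < enum_rank v)%N]|)%R.

(* dim over F of the reduced homology H~_{j-1}(Ind(G[S]); F) *)
Definition betti (S : {set T}) (j : nat) : nat :=
  (#|faces S j| - (if j is j'.+1 then \rank (bd S j') else 0)
    - \rank (bd S j))%N.

(* reg(G) = max { j >= 0 : H~_{j-1}(Ind(G[S])) <> 0 for some S }.
   Any j with nonzero homology satisfies j <= #|T|, so bounding j < #|T|+2
   loses nothing. *)
Definition reg : nat :=
  \max_(j < #|T|.+2 | [exists S : {set T}, betti S j != 0%N]) (j : nat).

Definition isK2 (A : {set T}) : bool :=
  [exists x, exists y, (A == [set x; y]) && (x != y) && e x y].

Definition isC5 (A : {set T}) : bool :=
  [exists f : {ffun 'I_5 -> T},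
     [&& injectiveb f, A == [set f i | i : 'I_5] &
         [forall i : 'I_5, forall k : 'I_5,
            e (f i) (f k) == ((k == (i.+1 %% 5) :> nat) || (i == (k.+1 %% 5) :> nat))]]].

Definition admissible (P : {set {set T}}) : bool :=
  [&& [forall A in P, isK2 A || isC5 A],
      [forall A in P, forall B in P, (A != B) ==> [disjoint A & B]] &
      [forall A in P, forall B in P, (A != B) ==>
          [forall x in A, forall y in B, ~~ e x y]]].

Definition weight (P : {set {set T}}) : nat :=
  (#|[set A in P | isK2 A]| + 2 * #|[set A in P | isC5 A]|)%N.

Definition triangle_free : Prop :=
  forall x y z, e x y -> e y z -> e x z -> False.

Definition P5_free : Prop :=
  forall f : 'I_5 -> T, injective f ->
    ~ (forall i k : 'I_5,
         e (f i) (f k) = ((k == i.+1 :> nat) || (i == k.+1 :> nat))).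

End Graphs.

From HB Require Import structures.
From mathcomp Require Import all_boot all_order all_algebra.
From mathcomp Require Import ring zify.
Set Implicit Arguments. Unset Strict Implicit. Unset Printing Implicit Defensive.
Import GRing.Theory.
Local Open Scope ring_scope.

(* Proof.  Chains are arbitrary functions on [{set T}]; [sgn] is the sign used
   by [bd], so [boundary] is the simplicial boundary of [Ind(G[S])] on chains
   supported by its faces.

   Lower bound: the independence complex of an admissible family is the join
   of the 0-spheres [Ind(K2)] and the circles [Ind(C5)], a sphere with faces of
   size at most its weight.  Its fundamental cycle, built by iterated cones,
   is nonzero in the top degree, hence not a boundary.

   Upper bound, by induction on [#|S|]: pick [v] of maximal degree.  Since
   [Ind(G[S])] is [Ind(G[S - v])] with a cone over the link [Ind(G[S - N[v]])]
   glued on, a cycle bounds in [S] as soon as cycles bound in [S - v] in the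
   same degree and in [S - N[v]] one degree lower; if [v] is isolated the link
   is all of [S - v].  In a triangle- and [P5]-free graph the maximum weight
   strictly drops from [S] to [S - N[v]] when [v] is not isolated: an optimal
   family in [S - N[v]] extends either by an edge at [v], or, if every
   neighbour of [v] sees the family, by trading a [K2] for a [C5] through [v]. *)

Section Chains.
Variables (T : finType) (F : fieldType).

Definition sgn (A : {set T}) (v : T) : F :=
  (-1) ^+ #|[set u in A | (enum_rank u < enum_rank v)%N]|.

Definition boundary (c : {set T} -> F) (B : {set T}) : F :=
  \sum_(w | w \notin B) sgn (w |: B) w * c (w |: B).

Definition is_cycle (c : {set T} -> F) := forall B, boundary c B = 0.

Definition cone (v : T) (c : {set T} -> F) (A : {set T}) : F :=
  if v \in A then sgn A v * c (A :\ v) else 0.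

Definition avoids (v : T) (c : {set T} -> F) := forall A : {set T}, v \in A -> c A = 0.

Lemma sgnU1 (A : {set T}) (w v : T) : w \notin A ->
  sgn (w |: A) v = (if (enum_rank w < enum_rank v)%N then -1 else 1) * sgn A v.
Proof.
move=> wA; rewrite /sgn.
have -> : [set u in w |: A | (enum_rank u < enum_rank v)%N] =
   if (enum_rank w < enum_rank v)%N then w |: [set u in A | (enum_rank u < enum_rank v)%N]
   else [set u in A | (enum_rank u < enum_rank v)%N].
  apply/setP=> u; rewrite !inE; case: ifP=> h; rewrite ?inE;
  by case: (eqVneq u w)=> [->|]; rewrite ?h ?(negbTE wA) //= orbF.
case: ifP=> _; last by rewrite mul1r.
by rewrite cardsU1 inE (negbTE wA) /= exprS.
Qed.

Lemma sgnU1_self (A : {set T}) (w : T) : sgn (w |: A) w = sgn A w.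
Proof.
rewrite /sgn; congr (_ ^+ _); apply: eq_card=> u; rewrite !inE.
by case: (eqVneq u w)=> [->|]; rewrite ?ltnn ?andbF.
Qed.

Lemma sgn_sqr (A : {set T}) (v : T) : sgn A v * sgn A v = 1.
Proof. by rewrite /sgn -exprD addnn -mul2n exprM sqrrN !expr1n. Qed.

Lemma sgn_neq0 (A : {set T}) (v : T) : sgn A v != 0.
Proof. by rewrite /sgn signr_eq0. Qed.

Lemma eq_boundary c d : (forall A, c A = d A) -> forall B, boundary c B = boundary d B.
Proof. by move=> h B; apply: eq_bigr=> w _; rewrite h. Qed.

Lemma boundaryD c d B : boundary (fun A => c A + d A) B = boundary c B + boundary d B.
Proof. by rewrite /boundary -big_split; apply: eq_bigr=> w _; rewrite mulrDr. Qed.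

Lemma boundaryN c B : boundary (fun A => - c A) B = - boundary c B.
Proof. by rewrite /boundary -sumrN; apply: eq_bigr=> w _; rewrite mulrN. Qed.

Lemma boundary0 B : boundary (fun _ => 0) B = 0.
Proof. by rewrite /boundary big1 // => w _; rewrite mulr0. Qed.

Lemma eq_cone (v : T) c d : (forall A, c A = d A) -> forall A, cone v c A = cone v d A.
Proof. by move=> h A; rewrite /cone h. Qed.

Lemma cone0 (v : T) c : (forall A, c A = 0) -> forall A, cone v c A = 0.
Proof. by move=> h A; rewrite /cone h mulr0; case: ifP. Qed.

Lemma boundary_avoids (v : T) c : avoids v c -> avoids v (boundary c).
Proof.
move=> h B vB; rewrite /boundary big1 // => w _; rewrite h ?mulr0 //.
by rewrite inE vB orbT.
Qed.

Lemma cone_avoids (p q : T) c : avoids p c -> p != q -> avoids p (cone q c).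
Proof.
move=> hc pq A pA; rewrite /cone; case: ifP => // _; rewrite hc ?mulr0 //.
by rewrite !inE pq.
Qed.

(* The cone is a contracting homotopy: inserting [v] and [w] in either order
   gives opposite signs, so the terms of the two sides containing both cancel. *)
Lemma boundary_cone (v : T) c : avoids v c -> forall B,
  boundary (cone v c) B = c B - cone v (boundary c) B.
Proof.
move=> hc B; rewrite /cone /boundary.
case: ifPn => vB; last first.
  rewrite subr0 (bigD1 v) //= setU11 setU1K // mulrA sgn_sqr mul1r big1 ?addr0 //.
  by move=> w /andP[wB wv]; rewrite in_setU1 eq_sym (negbTE wv) (negbTE vB) mulr0.
rewrite hc // sub0r -mulrN -sumrN big_distrr /=.
rewrite [in RHS](bigD1 v) /=; last by rewrite !inE eqxx.
rewrite setD1K // hc // !(mulr0, oppr0) add0r.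
apply: eq_big => [w|w wB].
  by rewrite in_setD1; case: (eqVneq w v) => [->|] /=; rewrite ?vB ?andbT.
have wv : w != v by apply: contraNneq wB => ->.
have vBv : v \notin B :\ v by rewrite !inE eqxx.
have -> : (w |: B) :\ v = w |: (B :\ v).
  by apply/setP=> u; rewrite !inE; case: (eqVneq u v) => [->|] //=; rewrite eq_sym (negbTE wv).
rewrite inE vB orbT !sgnU1_self (sgnU1 v wB) -[in sgn B w](setD1K vB) (sgnU1 w vBv).
have /negbTE : enum_rank w != enum_rank v by rewrite (inj_eq enum_rank_inj).
by case: ltngtP => [||/val_inj ->]; rewrite ?eqxx // => _ _; ring.
Qed.

Lemma boundary_double_cone (p q : T) c : is_cycle c -> avoids p c -> avoids q c -> p != q ->
  forall B, boundary (cone p (cone q c)) B = cone q c B - cone p c B.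
Proof.
move=> cc pc qc pq B; rewrite boundary_cone; last exact: cone_avoids.
by congr (_ - _); apply: eq_cone => A; rewrite boundary_cone // (cone0 _ cc) subr0.
Qed.

Definition deletion (v : T) c (A : {set T}) : F := if v \in A then 0 else c A.

Definition link (v : T) c (A : {set T}) : F :=
  if v \in A then 0 else sgn (v |: A) v * c (v |: A).

Lemma deletion_avoids v c : avoids v (deletion v c).
Proof. by move=> A vA; rewrite /deletion vA. Qed.

Lemma link_avoids v c : avoids v (link v c).
Proof. by move=> A vA; rewrite /link vA. Qed.

Lemma deletion_cone_link (v : T) c A : c A = deletion v c A + cone v (link v c) A.
Proof.
rewrite /deletion /cone /link; case: ifPn => vA; last by rewrite addr0.
by rewrite add0r !inE eqxx /= setD1K // mulrA sgn_sqr mul1r.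
Qed.

Lemma boundary_deletion_link (v : T) c B :
  boundary c B = boundary (deletion v c) B + link v c B - cone v (boundary (link v c)) B.
Proof.
by rewrite (eq_boundary (deletion_cone_link v c)) boundaryD (boundary_cone (@link_avoids v c)) addrA.
Qed.

Lemma cycle_link (v : T) c : is_cycle c ->
  (forall B, link v c B = - boundary (deletion v c) B) /\ is_cycle (link v c).
Proof.
move=> hc; split=> B.
  have := hc B; rewrite (boundary_deletion_link v).
  case: (boolP (v \in B)) => vB.
    by rewrite (@link_avoids v c _ vB) (boundary_avoids (@deletion_avoids v c) vB) oppr0.
  by rewrite /cone (negbTE vB) subr0 => /eqP; rewrite addrC addr_eq0 => /eqP.
case: (boolP (v \in B)) => vB; first by rewrite (boundary_avoids (@link_avoids v c) vB).
have := hc (v |: B); rewrite (boundary_deletion_link v).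
rewrite (@link_avoids v c _ (setU11 v B)) (boundary_avoids (@deletion_avoids v c) (setU11 v B)).
rewrite add0r sub0r /cone setU11 setU1K // => /eqP; rewrite oppr_eq0 mulf_eq0.
by rewrite (negbTE (sgn_neq0 _ _)) => /eqP.
Qed.

End Chains.

Section IndependenceComplex.
Variables (T : finType) (e : rel T) (F : fieldType).
Hypotheses (e_sym : symmetric e) (e_irr : irreflexive e).

Lemma indepP (A : {set T}) :
  reflect (forall x y, x \in A -> y \in A -> ~~ e x y) (indep e A).
Proof.
apply: (iffP idP) => [/forall_inP h x y xA yA | h].
  exact: (forall_inP (h x xA)).
by apply/forall_inP=> x xA; apply/forall_inP=> y yA; exact: h.
Qed.

Lemma indep_sub (A B : {set T}) : A \subset B -> indep e B -> indep e A.
Proof. by move=> sAB /indepP h; apply/indepP=> x y xA yA; apply: h; exact: (subsetP sAB). Qed.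

Lemma indepU1 (v : T) (A : {set T}) :
  indep e A -> (forall y, y \in A -> ~~ e v y) -> indep e (v |: A).
Proof.
move=> /indepP hA hv; apply/indepP=> x y; rewrite !in_setU1.
case/orP=> [/eqP->|xA]; case/orP=> [/eqP->|yA].
- by rewrite e_irr.
- exact: hv.
- by rewrite e_sym; exact: hv.
- exact: hA.
Qed.

Lemma facesP (S A : {set T}) j :
  reflect [/\ A \subset S, indep e A & #|A| = j] (A \in faces e S j).
Proof.
rewrite /faces inE; apply: (iffP and3P) => [[a b /eqP c]|[a b c]]; split=> //.
by rewrite c.
Qed.

Definition chain_on (S : {set T}) j (c : {set T} -> F) :=
  forall A, c A != 0 -> A \in faces e S j.

Definition cycles_bound (S : {set T}) j := forall c, chain_on S j c -> is_cycle c ->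
  exists2 d, chain_on S j.+1 d & forall B, boundary d B = c B.

(* [S] minus the closed neighbourhood of [v]: the link of [v] in [Ind(G[S])]. *)
Definition nonnbr (S : {set T}) (v : T) := [set u in S | (u != v) && ~~ e v u].

Lemma nonnbr_subD1 (S : {set T}) v : nonnbr S v \subset S :\ v.
Proof. by apply/subsetP=> u; rewrite !inE => /andP[-> /andP[-> _]]. Qed.

Lemma chain_on_sub (S1 S2 : {set T}) j c : S1 \subset S2 -> chain_on S1 j c -> chain_on S2 j c.
Proof.
by move=> s12 hc A /hc /facesP [sA iA cA]; apply/facesP; split=> //; exact: subset_trans s12.
Qed.

Lemma chain_onD (S : {set T}) j c d : chain_on S j c -> chain_on S j d ->
  chain_on S j (fun A => c A + d A).
Proof.
move=> hc hd A; case: (eqVneq (c A) 0) => [-> | /hc //].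
by rewrite add0r => /hd.
Qed.

Lemma chain_onN (S : {set T}) j c : chain_on S j c -> chain_on S j (fun A => - c A).
Proof. by move=> hc A; rewrite oppr_eq0; exact: hc. Qed.

Lemma chain_on_avoids (S : {set T}) j v c : chain_on S j c -> v \notin S -> avoids v c.
Proof.
move=> hc vS A vA; apply/eqP; apply: contraT => /hc /facesP [sA _ _].
by move: vS; rewrite (subsetP sA v vA).
Qed.

Lemma chain_on_cone (U S : {set T}) j v z : chain_on U j z -> v \in S -> U \subset S ->
  (forall y, y \in U -> (v != y) && ~~ e v y) -> chain_on S j.+1 (cone v z).
Proof.
move=> hz vS sUS hv A; rewrite /cone; case: ifPn => vA; last by rewrite eqxx.
rewrite mulf_eq0 negb_or => /andP[_ /hz /facesP [sA iA cA]].
have vAv : v \notin A :\ v by rewrite !inE eqxx.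
rewrite -(setD1K vA); apply/facesP; split.
- by rewrite subUset sub1set vS (subset_trans sA sUS).
- by apply: indepU1 => // y /(subsetP sA) /hv /andP[].
- by rewrite cardsU1 vAv cA.
Qed.

Lemma chain_on_link (S : {set T}) v j c :
  chain_on S j c -> chain_on (nonnbr S v) j.-1 (link v c).
Proof.
move=> hc A; rewrite /link; case: ifPn=> vA; first by rewrite eqxx.
rewrite mulf_eq0 negb_or => /andP[_ /hc /facesP [sA iA cA]].
have AvA : A \subset v |: A by apply/subsetP=> u uA; rewrite !inE uA orbT.
apply/facesP; split.
- apply/subsetP=> u uA; rewrite !inE (subsetP sA u (subsetP AvA u uA)).
  have -> : u != v by apply: contraNneq vA => <-.
  by apply: (indepP _ iA); rewrite !inE ?eqxx ?uA ?orbT.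
- exact: indep_sub iA.
- by move: cA; rewrite cardsU1 (negbTE vA) add1n => <-.
Qed.

Definition link_bounds (S : {set T}) v j := forall c, chain_on S j c -> is_cycle c ->
  exists2 b, chain_on (nonnbr S v) j b & forall B, boundary b B = link v c B.

Lemma cycles_bound_split (S : {set T}) v j : v \in S ->
  cycles_bound (S :\ v) j -> link_bounds S v j -> cycles_bound S j.
Proof.
move=> vS hSv hlk c hc cc.
have [dlk _] := cycle_link v cc.
have [b hb bb] := hlk c hc cc.
have bv : avoids v b.
  by apply: chain_on_avoids hb _; rewrite !inE eqxx andbF.
pose c' A := deletion v c A + b A.
have hc' : chain_on (S :\ v) j c'.
  apply: chain_onD; last exact: chain_on_sub (nonnbr_subD1 S v) hb.
  move=> A; rewrite /deletion; case: ifPn=> vA; first by rewrite eqxx.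
  move=> /hc /facesP [sA iA cA]; apply/facesP; split=> //.
  by rewrite subsetD1 sA.
have cc' : is_cycle c' by move=> B; rewrite /c' boundaryD bb dlk addrN.
have [d' hd' dd'] := hSv c' hc' cc'.
exists (fun A => d' A - cone v b A).
  apply: chain_onD; first exact: chain_on_sub (subD1set S v) hd'.
  apply: chain_onN; apply: (chain_on_cone hb vS); first exact: subset_trans (nonnbr_subD1 S v) (subD1set S v).
  by move=> y; rewrite !inE => /and3P[_ yv ->]; rewrite eq_sym yv.
move=> B; rewrite boundaryD boundaryN dd' (boundary_cone bv) /c' (eq_cone v bb).
by rewrite (deletion_cone_link v c B); ring.
Qed.

Lemma link_bounds_isolated (S : {set T}) v j :
  (forall u, u \in S -> ~~ e v u) -> link_bounds S v j.
Proof.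
move=> hv c hc cc; have [dlk _] := cycle_link v cc.
exists (fun A => - deletion v c A); last by move=> B; rewrite boundaryN dlk.
move=> A; rewrite oppr_eq0 /deletion; case: ifPn=> vA; first by rewrite eqxx.
move=> /hc /facesP [sA iA cA]; apply/facesP; split=> //.
apply/subsetP=> u uA; rewrite !inE (subsetP sA u uA) hv ?(subsetP sA u uA) // andbT.
by apply: contraNneq vA => <-.
Qed.

Lemma link_bounds_of (S : {set T}) v j : (0 < j)%N ->
  cycles_bound (nonnbr S v) j.-1 -> link_bounds S v j.
Proof.
move=> j0 hN c hc cc; have [_ clk] := cycle_link v cc.
by have := hN _ (chain_on_link (v := v) hc) clk; rewrite prednK.
Qed.

Lemma cycles_bound_set0 j : (0 < j)%N -> cycles_bound set0 j.
Proof.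
move=> j0 c hc _; exists (fun _ => 0) => [A|B]; first by rewrite eqxx.
suff -> : c B = 0 by rewrite boundary0.
apply/eqP; apply: contraT => /hc /facesP [sA _ cA].
by move: sA cA j0; rewrite subset0 => /eqP ->; rewrite cards0 => <-.
Qed.

Definition packing_in (S : {set T}) (P : {set {set T}}) : bool :=
  admissible e P && [forall A in P, A \subset S].

Definition max_weight (S : {set T}) : nat := \max_(P | packing_in S P) weight e P.

Lemma packing_in0 (S : {set T}) : packing_in S set0.
Proof. by apply/andP; split; [apply/and3P; split|]; apply/forall_inP => A; rewrite inE. Qed.

Lemma max_weight_mono (S1 S2 : {set T}) : S1 \subset S2 -> (max_weight S1 <= max_weight S2)%N.
Proof.
move=> s12; apply/bigmax_leqP=> P /andP[aP /forall_inP sP].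
apply: leq_bigmax_cond; rewrite /packing_in aP /=; apply/forall_inP=> A AP.
exact: subset_trans (sP A AP) s12.
Qed.

Definition deg (S : {set T}) (w : T) := #|[set u in S | e w u]|.

Definition max_weight_drops := forall (S : {set T}) (v : T),
  v \in S -> (exists2 u, u \in S & e v u) ->
  (forall w, w \in S -> deg S w <= deg S v)%N ->
  (max_weight (nonnbr S v) < max_weight S)%N.

Section UpperBound.

Hypothesis drops : max_weight_drops.

Lemma cycles_bound_above (S : {set T}) j : (max_weight S < j)%N -> cycles_bound S j.
Proof.
move: {2}#|S| (leqnn #|S|) => n; elim: n S j => [|n IH] S j hS hj;
  have j0 : (0 < j)%N by apply: leq_ltn_trans hj.
  by move: hS; rewrite leqn0 cards_eq0 => /eqP ->; exact: cycles_bound_set0.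
have [->|[v0 v0S]] := set_0Vmem S; first exact: cycles_bound_set0.
have [v vS vmax] : exists2 v, v \in S & forall w, w \in S -> (deg S w <= deg S v)%N.
  by case: (arg_maxnP (deg S) v0S) => v; exists v.
have cSv : (#|S :\ v| <= n)%N by move: hS; rewrite (cardsD1 v S) vS add1n ltnS.
apply: (cycles_bound_split vS).
  by apply: IH => //; apply: leq_ltn_trans hj; apply: max_weight_mono; exact: subD1set.
have [[u uS vu] | hv] := altP (@exists_inP _ (mem S) (e v)); last first.
  by apply: link_bounds_isolated => u uS; apply: contra hv => vu; apply/exists_inP; exists u.
apply: (link_bounds_of j0 (IH _ _ _ _)).
  exact: leq_trans (subset_leq_card (nonnbr_subD1 S v)) cSv.
rewrite -ltnS prednK //.
exact: leq_ltn_trans (drops vS (ex_intro2 _ _ u uS vu) vmax) hj.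
Qed.

End UpperBound.

End IndependenceComplex.

Lemma rank_lt_of_mul0 (F : fieldType) m n (M : 'M[F]_(m, n)) (x : 'rV_m) :
  x != 0 -> x *m M = 0 -> (\rank M < m)%N.
Proof.
move=> x0 xM; rewrite ltn_neqAle rank_leq_row andbT; apply: contra x0 => /eqP hr.
have Mfree : row_free M by rewrite /row_free hr.
by apply/eqP/(row_free_inj Mfree); rewrite mul0mx xM.
Qed.

Section Homology.
Variables (T : finType) (e : rel T) (F : fieldType).

Lemma boundary_outside (S B : {set T}) j (c : {set T} -> F) :
  chain_on e S j.+1 c -> B \notin faces e S j -> boundary c B = 0.
Proof.
move=> hc hB; rewrite /boundary big1 // => w wB.
case: (eqVneq (c (w |: B)) 0) => [->|/hc /facesP [sA iA cA]]; first by rewrite mulr0.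
have BwB : B \subset w |: B by apply/subsetP=> u uB; rewrite !inE uB orbT.
case/negP: hB; apply/facesP; split.
- exact: subset_trans sA.
- exact: indep_sub iA.
- by move: cA; rewrite cardsU1 wB add1n => -[].
Qed.

Definition row_chain (S : {set T}) j (c : {set T} -> F) : 'rV[F]_#|faces e S j| :=
  \row_i c (enum_val i).

Lemma row_chain_mul_bd (S : {set T}) j d : chain_on e S j.+1 d ->
  forall k, (row_chain S j.+1 d *m bd e F S j) 0 k = boundary d (enum_val k).
Proof.
move=> hd k; set B := enum_val k; rewrite !mxE.
transitivity (\sum_(A in faces e S j.+1) d A * \sum_(v in A | B == A :\ v) sgn F A v).
  by rewrite [RHS]big_enum_val /=; apply: eq_bigr => i _; rewrite !mxE.
transitivity (\sum_(A : {set T}) d A * \sum_(v in A | B == A :\ v) sgn F A v).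
  rewrite [in RHS](bigID (mem (faces e S j.+1))) /= [X in _ = _ + X]big1 ?addr0 //.
  move=> A hA; case: (eqVneq (d A) 0) => [->|/hd]; first by rewrite mul0r.
  by rewrite (negbTE hA).
transitivity (\sum_(A : {set T}) \sum_(v : T) (if (v \in A) && (B == A :\ v) then sgn F A v * d A else 0)).
  apply: eq_bigr => A _; rewrite big_distrr /= big_mkcond /=.
  by apply: eq_bigr => v _; case: ifP; rewrite ?mulr0 // mulrC.
rewrite exchange_big /boundary [in RHS]big_mkcond /=; apply: eq_bigr => v _.
case: ifPn => vB.
  rewrite -big_mkcond (big_pred1 (v |: B)) // => A /=.
  apply/idP/eqP => [/andP[vA /eqP ->]|->]; first by rewrite setD1K.
  by rewrite setU11 setU1K // eqxx.
rewrite big1 // => A _; case: ifP => // /andP[_ /eqP hB].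
by move: vB; rewrite hB !inE eqxx.
Qed.

Lemma ker_bd_sub (S : {set T}) k (x : 'rV_#|faces e S k.+1|) :
  cycles_bound e F S k.+1 -> x *m bd e F S k = 0 -> (x <= bd e F S k.+1)%MS.
Proof.
move=> hS hx.
pose c (A : {set T}) := \sum_(i | enum_val i == A) x 0 i.
have cE i : c (enum_val i) = x 0 i.
  by rewrite /c (big_pred1 i) // => i'; exact: (inj_eq enum_val_inj).
have hc : chain_on e S k.+1 c.
  move=> A; apply: contraR => hA; rewrite /c big_pred0 // => i.
  by apply: contraNF hA => /eqP <-; exact: enum_valP.
have xE : x = row_chain S k.+1 c by apply/rowP => i; rewrite mxE cE.
have cc : is_cycle c.
  move=> B; case: (boolP (B \in faces e S k)) => hB; last exact: boundary_outside hc hB.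
  by rewrite -(enum_rankK_in hB hB) -row_chain_mul_bd // -xE hx mxE.
have [d hd dd] := hS c hc cc.
suff -> : x = row_chain S k.+2 d *m bd e F S k.+1 by exact: submxMl.
by apply/rowP => i; rewrite row_chain_mul_bd // dd cE.
Qed.

Lemma betti_eq0 (S : {set T}) k : cycles_bound e F S k.+1 -> betti e F S k.+1 = 0%N.
Proof.
move=> hS; rewrite /betti -subnDA; apply/eqP; rewrite subn_eq0.
have hk : (kermx (bd e F S k) <= bd e F S k.+1)%MS.
  by apply/row_subP => i; apply: ker_bd_sub hS _; rewrite -row_mul mulmx_ker row0.
apply: (@leq_trans (\rank (kermx (bd e F S k)) + \rank (bd e F S k))).
  by rewrite mxrank_ker subnK // rank_leq_row.
by rewrite addnC leq_add2l; exact: mxrankS.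
Qed.

(* No face of [Ind(G[S])] has more than [w] vertices, so [z] is not a boundary. *)
Lemma betti_neq0 (S A0 : {set T}) w (z : {set T} -> F) :
  chain_on e S w z -> is_cycle z -> z A0 != 0 ->
  (forall A : {set T}, A \subset S -> indep e A -> (#|A| <= w)%N) ->
  betti e F S w != 0%N.
Proof.
move=> hz cz zA0 hmax.
have top0 : \rank (bd e F S w) = 0%N.
  apply/eqP; rewrite -leqn0; apply: leq_trans (rank_leq_row _) _.
  rewrite leqn0 cards_eq0; apply/eqP/setP => A; rewrite in_set0; apply/negP.
  by move=> /facesP [sA iA cA]; have := hmax A sA iA; rewrite cA ltnn.
rewrite /betti top0 subn0.
have hA0 := hz _ zA0.
case: w hz hA0 {hmax top0} => [|k] hz hA0.
  by rewrite subn0 -lt0n card_gt0; apply/set0Pn; exists A0.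
rewrite subn_eq0 -ltnNge; apply: (@rank_lt_of_mul0 _ _ _ _ (row_chain S k.+1 z)).
  apply: contra zA0 => /eqP/rowP/(_ (enum_rank_in hA0 A0)).
  by rewrite !mxE enum_rankK_in // => ->.
by apply/rowP => k'; rewrite row_chain_mul_bd // cz mxE.
Qed.

End Homology.

Definition cycle5 (i k : 'I_5) : bool :=
  (k == (i.+1 %% 5)%N :> nat) || (i == (k.+1 %% 5)%N :> nat).

(* [ordS] maps an independent set of [C5] into its complement. *)
Lemma indep_cycle5_le2 (I : {set 'I_5}) :
  (forall i k, i \in I -> k \in I -> ~~ cycle5 i k) -> (#|I| <= 2)%N.
Proof.
move=> hI; have sub : (@ordS 5) @: I \subset ~: I.
  apply/subsetP=> y /imsetP [i iI ->]; rewrite inE; apply/negP=> hi.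
  by move: (hI i _ iI hi); rewrite /cycle5 eqxx.
have := subset_leq_card sub; rewrite card_imset; last exact: ordS_inj.
by rewrite [#|~: I|]cardsCs setCK card_ord; move: #|I| => n; lia.
Qed.

Section Packings.
Variables (T : finType) (e : rel T).
Hypotheses (e_sym : symmetric e) (e_irr : irreflexive e).

Lemma isK2P (A : {set T}) :
  reflect (exists a b, [/\ A = [set a; b], a != b & e a b]) (isK2 e A).
Proof.
apply: (iffP existsP) => [[a /existsP [b /andP[/andP[/eqP -> ab] eab]]]|[a [b [-> ab eab]]]].
  by exists a, b.
by exists a; apply/existsP; exists b; rewrite eqxx ab eab.
Qed.

Lemma isC5P (A : {set T}) : isC5 e A -> exists f : {ffun 'I_5 -> T},
  [/\ injective f, A = [set f i | i : 'I_5] & forall i k, e (f i) (f k) = cycle5 i k].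
Proof.
case/existsP => f /and3P [/injectiveP fi /eqP -> /forallP h]; exists f; split=> // i k.
exact/eqP/(forallP (h i) k).
Qed.

Lemma K2_notC5 (A : {set T}) : isK2 e A -> ~~ isC5 e A.
Proof.
case/isK2P => a [b [-> ab _]]; apply/negP => /isC5P [f [fi fE _]].
have : #|[set a; b]| = 5%N by rewrite fE card_imset // card_ord.
by rewrite cards2 ab.
Qed.

Definition separated (A B : {set T}) : bool :=
  [forall x in A, forall y in B, (x != y) && ~~ e x y].

Lemma separatedP (A B : {set T}) :
  reflect (forall x y, x \in A -> y \in B -> (x != y) && ~~ e x y) (separated A B).
Proof.
apply: (iffP forall_inP) => [h x y xA yB | h x xA]; first exact: (forall_inP (h x xA)).
by apply/forall_inP => y; exact: h.
Qed.

Lemma admissibleP (P : {set {set T}}) :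
  reflect ((forall A, A \in P -> isK2 e A || isC5 e A) /\
           (forall A B, A \in P -> B \in P -> A != B -> separated A B))
          (admissible e P).
Proof.
apply: (iffP and3P) => [[/forall_inP hk /forall_inP hd /forall_inP he] | [hk hs]].
  split=> // A B AP BP AB; apply/separatedP => x y xA yB.
  have dAB := implyP (forall_inP (hd A AP) B BP) AB.
  rewrite (forall_inP (forall_inP (implyP (forall_inP (he A AP) B BP) AB) x xA) y yB) andbT.
  by apply: contraTneq yB => <-; rewrite (disjointFr dAB xA).
split; first exact/forall_inP.
- apply/forall_inP => A AP; apply/forall_inP => B BP; apply/implyP => AB.
  apply/pred0P => x /=; apply/negbTE/negP => /andP[xA xB].
  by have /separatedP/(_ x x xA xB) := hs A B AP BP AB; rewrite eqxx.
- apply/forall_inP => A AP; apply/forall_inP => B BP; apply/implyP => AB.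
  apply/forall_inP => x xA; apply/forall_inP => y yB.
  by have /separatedP/(_ x y xA yB)/andP[] := hs A B AP BP AB.
Qed.

Lemma K2_meet_indep (H A : {set T}) : isK2 e H -> indep e A -> (#|A :&: H| <= 1)%N.
Proof.
case/isK2P => a [b [-> ab eab]] /indepP iA.
have [aA|aA] := boolP (a \in A).
  have bA : b \notin A by apply: contraL eab; exact: iA.
  rewrite -(cards1 a); apply/subset_leq_card/subsetP => x.
  by rewrite !inE => /andP[xA /orP[//|/eqP xb]]; rewrite -xb xA in bA.
rewrite -(cards1 b); apply/subset_leq_card/subsetP => x.
by rewrite !inE => /andP[xA /orP[/eqP xa|//]]; rewrite -xa xA in aA.
Qed.

Lemma C5_meet_indep (H A : {set T}) : isC5 e H -> indep e A -> (#|A :&: H| <= 2)%N.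
Proof.
case/isC5P => f [fi -> fe] /indepP iA.
have -> : A :&: [set f i | i : 'I_5] = f @: [set i | f i \in A].
  apply/setP=> x; rewrite inE; apply/andP/imsetP => [[xA /imsetP [i _ xE]]|[i]].
    by exists i => //; rewrite inE -xE.
  by rewrite inE => fA ->; rewrite imset_f.
rewrite card_imset //; apply: indep_cycle5_le2 => i k; rewrite !inE -fe; exact: iA.
Qed.

Definition seq_weight (s : seq {set T}) : nat :=
  (\sum_(A <- s) (if isK2 e A then 1 else 2))%N.

Lemma indep_le_seq_weight (s : seq {set T}) (A : {set T}) :
  all (fun H => isK2 e H || isC5 e H) s ->
  A \subset \bigcup_(H <- s) H -> indep e A -> (#|A| <= seq_weight s)%N.
Proof.
elim: s A => [|H s IH] A /=; rewrite /seq_weight ?big_nil ?big_cons.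
  by rewrite subset0 => _ /eqP -> _; rewrite cards0.
move=> /andP[hH hs] sA iA; rewrite -(cardsID H A); apply: leq_add.
  case: ifP => hK; first exact: K2_meet_indep.
  by apply: C5_meet_indep iA; rewrite hK in hH.
apply: IH _ hs _ (indep_sub (subsetDl _ _) iA).
by rewrite subDset.
Qed.

Variable F : fieldType.

Definition nontrivial_cycle_on (S : {set T}) w (z : {set T} -> F) :=
  [/\ chain_on e S w z, is_cycle z & exists A, z A != 0].

Lemma nontrivial_cycle_on_set0 : exists z, nontrivial_cycle_on set0 0 z.
Proof.
exists (fun A => if A == set0 then 1 else 0); split.
- move=> A /=; case: ifPn => [/eqP -> _|_]; last by rewrite eqxx.
  by apply/facesP; split; rewrite ?sub0set ?cards0 //; apply/indepP => x y; rewrite inE.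
- move=> B; rewrite /boundary big1 // => w _.
  suff /negbTE -> : w |: B != set0 by rewrite mulr0.
  by apply/set0Pn; exists w; rewrite setU11.
- by exists set0; rewrite eqxx oner_neq0.
Qed.

Section Join.
Variables (U : {set T}) (w : nat) (z : {set T} -> F).
Hypothesis (hz : nontrivial_cycle_on U w z).

Lemma cone_on (H : {set T}) x : separated H U -> x \in H ->
  chain_on e (H :|: U) w.+1 (cone x z).
Proof.
move=> /separatedP hHU xH; have [zU _ _] := hz.
by apply: (chain_on_cone e_sym e_irr zU) (subsetUr _ _) _; [rewrite inE xH | move=> y; exact: hHU].
Qed.

Lemma notin_nontrivial_cycle_on (H : {set T}) x A : separated H U -> x \in H -> z A != 0 ->
  x \notin A.
Proof.
have [zU _ _] := hz; move=> /separatedP hHU xH /zU /facesP [sA _ _].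
by apply/negP => /(subsetP sA) /(hHU x _ xH); rewrite eqxx.
Qed.

Lemma avoids_separated (H : {set T}) x : separated H U -> x \in H -> avoids x z.
Proof.
move=> hHU xH A xA; apply/eqP; apply: contraT => /(notin_nontrivial_cycle_on hHU xH).
by rewrite xA.
Qed.

Lemma suspension_cycle (a b : T) : a != b -> separated [set a; b] U ->
  exists z', nontrivial_cycle_on ([set a; b] :|: U) w.+1 z'.
Proof.
move=> ab hsep; have [zU cz [A0 zA0]] := hz.
have aH : a \in [set a; b] by rewrite !inE eqxx.
have bH : b \in [set a; b] by rewrite !inE eqxx orbT.
exists (fun A => cone a z A - cone b z A); split.
- exact: chain_onD (cone_on hsep aH) (chain_onN (cone_on hsep bH)).
- move=> B; rewrite boundaryD boundaryN (boundary_cone (avoids_separated hsep aH)).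
  rewrite (boundary_cone (avoids_separated hsep bH)).
  by rewrite !(cone0 _ cz) subrr.
exists (a |: A0); rewrite /cone setU11 setU1K ?(notin_nontrivial_cycle_on hsep aH zA0) //.
rewrite in_setU1 [b == a]eq_sym (negbTE ab) (negbTE (notin_nontrivial_cycle_on hsep bH zA0)) subr0.
by rewrite mulf_neq0 ?sgn_neq0.
Qed.

(* The non-edges of [C5] form the pentagram 0-2-4-1-3-0; the boundaries of
   the double cones over its edges telescope around it. *)
Lemma pentagon_cycle (f : 'I_5 -> T) : injective f ->
  (forall i k, e (f i) (f k) = cycle5 i k) -> separated [set f i | i : 'I_5] U ->
  exists z', nontrivial_cycle_on ([set f i | i : 'I_5] :|: U) w.+2 z'.
Proof.
move=> fi fe hsep; have [zU cz [A0 zA0]] := hz.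
set H := [set f i | i : 'I_5] in hsep *.
have fH i : f i \in H by exact: imset_f.
have nA0 i : f i \notin A0 := notin_nontrivial_cycle_on hsep (fH i) zA0.
have avz i : avoids (f i) z := avoids_separated hsep (fH i).
have fne i k : i != k -> f i != f k by rewrite (inj_eq fi).
pose t i k := cone (f i) (cone (f k) z).
have t_on i k : i != k -> ~~ cycle5 i k -> chain_on e (H :|: U) w.+2 (t i k).
  move=> ik nik.
  have zk : chain_on e (f k |: U) w.+1 (cone (f k) z).
    apply: (chain_on_cone e_sym e_irr zU) (subsetUr _ _) _; first by rewrite setU11.
    by move=> y; exact: (separatedP _ _ hsep) (fH k).
  apply: (chain_on_cone e_sym e_irr zk).
  - by rewrite inE fH.
  - by rewrite subUset sub1set inE fH subsetUr.
  - move=> y; rewrite in_setU1 => /orP [/eqP ->|]; last exact: (separatedP _ _ hsep) (fH i).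
    by rewrite fne // fe nik.
have bt i k : i != k -> forall B, boundary (t i k) B = cone (f k) z B - cone (f i) z B.
  by move=> ik; apply: boundary_double_cone cz (avz i) (avz k) (fne _ _ ik).
pose o0 := @Ordinal 5 0 isT; pose o1 := @Ordinal 5 1 isT; pose o2 := @Ordinal 5 2 isT.
pose o3 := @Ordinal 5 3 isT; pose o4 := @Ordinal 5 4 isT.
exists (fun A => t o0 o2 A + t o2 o4 A + t o4 o1 A
               + t o1 o3 A + t o3 o0 A); split.
- by repeat apply: chain_onD; apply: t_on.
- by move=> B; rewrite !boundaryD !bt //; ring.
have cone_out x c (A : {set T}) : x \notin A -> cone x c A = 0.
  by move=> xA; rewrite /cone (negbTE xA).
have tA i k (A : {set T}) : f k \notin A -> t i k A = 0.
  move=> kA; rewrite /t {1}/cone; case: ifP => // _.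
  by rewrite cone_out ?mulr0 // !inE negb_and kA orbT.
have nA i : i \notin [:: o0; o2] -> f i \notin f o0 |: (f o2 |: A0).
  by rewrite !inE !negb_or => /andP[i0 i2]; rewrite !fne // nA0.
exists (f o0 |: (f o2 |: A0)).
rewrite (tA _ o4) ?nA // (tA _ o1) ?nA // (tA _ o3) ?nA // [t o3 o0 _]/t cone_out ?nA //.
rewrite !addr0 /t /cone setU11 setU1K; last by rewrite in_setU1 negb_or fne // nA0.
by rewrite setU11 setU1K ?nA0 // !mulf_neq0 ?sgn_neq0.
Qed.

End Join.

Lemma nontrivial_cycle_of_family (s : seq {set T}) :
  all (fun H => isK2 e H || isC5 e H) s -> pairwise separated s ->
  exists z, nontrivial_cycle_on (\bigcup_(H <- s) H) (seq_weight s) z.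
Proof.
elim: s => [|H s IH] /=.
  by move=> _ _; rewrite /seq_weight !big_nil; exact: nontrivial_cycle_on_set0.
move=> /andP[hH hs] /andP[sepH ps]; have [z hz] := IH hs ps.
rewrite /seq_weight !big_cons -/(seq_weight s).
have sepU : separated H (\bigcup_(A <- s) A).
  apply/separatedP => x y xH; rewrite bigcup_seq => /bigcupP [A As yA].
  exact: (separatedP _ _ (allP sepH A As)).
have [hK|hK] := boolP (isK2 e H).
  case/isK2P: hK sepU => a [b [-> ab _]] sepU; rewrite add1n.
  exact (suspension_cycle hz ab sepU).
rewrite (negbTE hK) /= in hH; case/isC5P: hH sepU => f [fi -> fe] sepU.
by rewrite add2n; exact (pentagon_cycle hz fi fe sepU).
Qed.

End Packings.

Section InducedSubgraphs.
Variables (T : finType) (e : rel T).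
Hypotheses (e_sym : symmetric e) (e_irr : irreflexive e).

Lemma edge_neq (x y : T) : e x y -> x != y.
Proof. by apply: contraTneq => ->; rewrite e_irr. Qed.

Lemma nbr_neq (x y z : T) : ~~ e x z -> e y z -> x != y.
Proof. by move=> xz; apply: contraTneq => <-. Qed.

Lemma nth5_inj (x0 : T) (s : seq T) : uniq s -> size s = 5 ->
  injective (fun i : 'I_5 => nth x0 s i).
Proof. by move=> us s5 i k /eqP; rewrite nth_uniq ?s5 // => /eqP/val_inj. Qed.

Lemma edge_pattern5 (p : rel 'I_5) (f : 'I_5 -> T) : symmetric p -> irreflexive p ->
  (forall i k : 'I_5, (i < k)%N -> e (f i) (f k) = p i k) ->
  forall i k, e (f i) (f k) = p i k.
Proof.
move=> p_sym p_irr hlt i k; case: (ltngtP i k) => [ik|ki|/val_inj ->].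
- exact: hlt.
- by rewrite e_sym p_sym; exact: hlt.
- by rewrite e_irr p_irr.
Qed.

Definition path5 (i k : 'I_5) : bool := (k == i.+1 :> nat) || (i == k.+1 :> nat).

Lemma path5_sym : symmetric path5.
Proof. by move=> i k; rewrite /path5 orbC. Qed.

Lemma path5_irr : irreflexive path5.
Proof. by move=> i; rewrite /path5 orbb; apply/negbTE/eqP/n_Sn. Qed.

Lemma cycle5_sym : symmetric cycle5.
Proof. by move=> i k; rewrite /cycle5 orbC. Qed.

Lemma cycle5_irr : irreflexive cycle5.
Proof. by case=> [[|[|[|[|[|i]]]]] hi]. Qed.

Hypothesis P5F : P5_free e.

Lemma no_induced_P5 (a b c d x : T) : e a b -> e b c -> e c d -> e d x ->
  ~~ e a c -> ~~ e a d -> ~~ e a x -> ~~ e b d -> ~~ e b x -> ~~ e c x -> False.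
Proof.
move=> ab bc cd dx ac ad ax bd bx cx.
have dc : e d c by rewrite e_sym.
have xd : e x d by rewrite e_sym.
have cb : e c b by rewrite e_sym.
have us : uniq [:: a; b; c; d; x].
  rewrite /= !inE !negb_or (edge_neq ab) (edge_neq bc) (edge_neq cd) (edge_neq dx).
  rewrite (nbr_neq ad cd) (nbr_neq ac dc) (nbr_neq ad xd) (nbr_neq bx dx) (nbr_neq bd xd).
  by rewrite eq_sym (nbr_neq _ cb) // e_sym.
case: (P5F (nth5_inj (x0 := a) us erefl)).
apply: edge_pattern5 path5_sym path5_irr _.
move=> [[|[|[|[|[|i]]]]] hi] [[|[|[|[|[|k]]]]] hk] //= _.
all: by rewrite ?ab ?bc ?cd ?dx ?(negbTE ac) ?(negbTE ad) ?(negbTE ax) ?(negbTE bd)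
                ?(negbTE bx) ?(negbTE cx).
Qed.

Hypothesis K3F : triangle_free e.

Lemma tri_nonadj (a b c : T) : e a b -> e b c -> ~~ e a c.
Proof. by move=> ab bc; apply/negP; exact: K3F ab bc. Qed.

Lemma far_edge_nonadj (a b c t t' : T) : e a b -> e b c -> e t t' ->
  ~~ e a t -> ~~ e a t' -> ~~ e b t -> ~~ e b t' -> ~~ e c t.
Proof.
move=> ab bc tt' a_t a_t' b_t b_t'; apply/negP => ct.
exact: no_induced_P5 ab bc ct tt' (tri_nonadj ab bc) a_t a_t' b_t b_t' (tri_nonadj ct tt').
Qed.

Lemma isC5_of_walk (a b c d x : T) : e a b -> e b c -> e c d -> e d x -> e x a ->
  isC5 e [set y | y \in [:: a; b; c; d; x]].
Proof.
move=> ab bc cd dx xa.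
have dc : e d c by rewrite e_sym.
have xd : e x d by rewrite e_sym.
have cb : e c b by rewrite e_sym.
have ax : e a x by rewrite e_sym.
have ac := tri_nonadj ab bc; have bd := tri_nonadj bc cd; have cx := tri_nonadj cd dx.
have ad : ~~ e a d by rewrite e_sym; exact: tri_nonadj dx xa.
have bx : ~~ e b x by rewrite e_sym; exact: tri_nonadj xa ab.
have us : uniq [:: a; b; c; d; x].
  rewrite /= !inE !negb_or (edge_neq ab) (edge_neq bc) (edge_neq cd) (edge_neq dx) (edge_neq ax).
  rewrite (nbr_neq ad cd) (nbr_neq ac dc) (nbr_neq bx dx) (nbr_neq bd xd).
  by rewrite eq_sym (nbr_neq _ cb) // e_sym.
pose f := [ffun i : 'I_5 => nth a [:: a; b; c; d; x] i].
apply/existsP; exists f; apply/and3P; split.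
- by apply/injectiveP => i k; rewrite !ffunE; exact: nth5_inj.
- apply/eqP/setP => y; rewrite inE; apply/idP/imsetP => [/(nthP a) [i hi <-]|[i _ ->]].
    by exists (Ordinal hi); rewrite ?ffunE.
  by rewrite ffunE mem_nth.
apply/forallP => i; apply/forallP => k; apply/eqP; move: i k.
apply: edge_pattern5 cycle5_sym cycle5_irr _.
move=> [[|[|[|[|[|i]]]]] hi] [[|[|[|[|[|k]]]]] hk] //= _; rewrite !ffunE /=.
all: by rewrite ?ab ?bc ?cd ?dx ?ax ?(negbTE ac) ?(negbTE ad) ?(negbTE bd) ?(negbTE bx)
                ?(negbTE cx).
Qed.

End InducedSubgraphs.

Section Growth.
Variables (T : finType) (e : rel T).
Hypotheses (e_sym : symmetric e) (e_irr : irreflexive e).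
Hypotheses (K3F : triangle_free e) (P5F : P5_free e).

Lemma separated_sym (A B : {set T}) : separated e A B = separated e B A.
Proof.
by apply/separatedP/separatedP => h x y xA yB; have /andP[xy exy] := h y x yB xA;
  rewrite eq_sym xy e_sym.
Qed.

Lemma admissibleU1 (C : {set T}) (Q : {set {set T}}) : admissible e Q ->
  isK2 e C || isC5 e C -> (forall B, B \in Q -> separated e C B) -> admissible e (C |: Q).
Proof.
move=> /admissibleP [hk hs] hC hsep; apply/admissibleP; split=> [A|A B].
  by rewrite in_setU1 => /orP [/eqP ->|/hk].
rewrite !in_setU1 => /orP [/eqP ->|AQ] /orP [/eqP ->|BQ] AB.
- by rewrite eqxx in AB.
- exact: hsep.
- by rewrite separated_sym; exact: hsep.
- exact: hs.
Qed.

Lemma admissible_sub (Q P : {set {set T}}) : Q \subset P -> admissible e P -> admissible e Q.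
Proof.
move=> /subsetP sQP /admissibleP [hk hs]; apply/admissibleP; split=> [A /sQP|A B /sQP AP /sQP].
  exact: hk.
exact: hs.
Qed.

Lemma weightU1_K2 (C : {set T}) (Q : {set {set T}}) : isK2 e C -> C \notin Q ->
  weight e (C |: Q) = (weight e Q).+1.
Proof.
move=> hC CQ; rewrite /weight.
have -> : [set A in C |: Q | isK2 e A] = C |: [set A in Q | isK2 e A].
  by apply/setP => A; rewrite !inE; case: (eqVneq A C) => [->|] //=; rewrite hC.
have -> : [set A in C |: Q | isC5 e A] = [set A in Q | isC5 e A].
  apply/setP => A; rewrite !inE; case: (eqVneq A C) => [->|] //=.
  by rewrite (negbTE (K2_notC5 hC)) andbF.
by rewrite cardsU1 inE (negbTE CQ).
Qed.

Lemma weight_swap_K2_C5 (H C : {set T}) (P : {set {set T}}) : H \in P -> isK2 e H ->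
  isC5 e C -> C \notin P -> weight e (C |: (P :\ H)) = (weight e P).+1.
Proof.
move=> HP hH hC CP; rewrite /weight.
have CK : isK2 e C = false by apply/negbTE; apply: contraTN hC; exact: K2_notC5.
have -> : [set A in C |: (P :\ H) | isK2 e A] = [set A in P | isK2 e A] :\ H.
  apply/setP => A; rewrite !inE; case: (eqVneq A C) => [->|AC] /=.
    by rewrite CK (negbTE CP) !andbF.
  by rewrite andbA.
have -> : [set A in C |: (P :\ H) | isC5 e A] = C |: [set A in P | isC5 e A].
  apply/setP => A; rewrite !inE; case: (eqVneq A C) => [->|AC] /=; first by rewrite hC.
  by case: (eqVneq A H) => [->|] //=; rewrite (negbTE (K2_notC5 hH)) andbF.
rewrite cardsU1 inE (negbTE CP) /= add1n.
have := cardsD1 H [set A in P | isK2 e A]; rewrite inE HP hH /= add1n => ->.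
by rewrite mulnS !addnS addSn.
Qed.

Lemma C5_around (H : {set T}) (x : T) : isC5 e H -> x \in H ->
  exists h1 h2 h3 h4, [/\ [&& h1 \in H, h2 \in H, h3 \in H & h4 \in H],
                         e x h1 && e h1 h2, e h2 h3 & e h3 h4 && e h4 x].
Proof.
case/isC5P => f [_ -> fe] /imsetP [i _ ->].
have step j : e (f j) (f (ordS j)) by rewrite fe /cycle5 eqxx.
have ordS5 : ordS (ordS (ordS (ordS (ordS i)))) = i.
  by apply/val_inj; case: i => [[|[|[|[|[|i]]]]] hi].
exists (f (ordS i)), (f (ordS (ordS i))), (f (ordS (ordS (ordS i)))),
       (f (ordS (ordS (ordS (ordS i))))).
by rewrite !imset_f // !step; have := step (ordS (ordS (ordS (ordS i)))); rewrite ordS5.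
Qed.

Lemma component_nbr (A : {set T}) t : isK2 e A || isC5 e A -> t \in A ->
  exists2 t', t' \in A & e t t'.
Proof.
case/orP => [/isK2P [a [b [-> _ eab]]]|hC tA].
  by rewrite !inE => /orP [/eqP ->|/eqP ->]; [exists b | exists a];
     rewrite ?inE ?eqxx ?orbT // e_sym.
by have [h1 [_ [_ [_ [/and4P [h1H _ _ _] /andP [th1 _] _ _]]]]] := C5_around hC tA; exists h1.
Qed.

Lemma C5_no_pendant_P2 (H : {set T}) (x u v : T) : isC5 e H -> x \in H -> e u x -> e v u ->
  (forall h, h \in H -> ~~ e v h) -> False.
Proof.
move=> hC xH ux vu vH.
have [h1 [h2 [h3 [h4 [/and4P [h1H h2H h3H h4H] /andP [xh1 h12] h23 /andP [h34 h4x]]]]]] :=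
  C5_around hC xH.
have uv : e u v by rewrite e_sym.
have xu : e x u by rewrite e_sym.
have uh j k : j \in H -> k \in H -> e j x -> e k j -> e u k.
  move=> jH kH jx kj; apply/negPn/negP => uk.
  have ku : ~~ e k u by rewrite e_sym.
  have kv : ~~ e k v by rewrite e_sym vH.
  have jv : ~~ e j v by rewrite e_sym vH.
  have xj : e x j by rewrite e_sym.
  have ju : ~~ e j u by rewrite e_sym (tri_nonadj K3F ux xj).
  by have := far_edge_nonadj e_sym e_irr P5F K3F kj jx uv ku kv ju jv; rewrite xu.
have uh2 : e u h2 by apply: (uh h1); rewrite // e_sym.
have uh3 : e u h3 by apply: (uh h4); rewrite // e_sym.
by have /negP := tri_nonadj K3F uh2 h23.
Qed.

Lemma K2_nbr_cover (v u0 x y u : T) : e v u0 -> e u0 x -> e x y -> ~~ e v x -> ~~ e v y ->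
  e v u -> e u x || e u y.
Proof.
move=> vu0 u0x xy vx vy vu; apply/negPn/negP; rewrite negb_or => /andP[ux uy].
have yx : e y x by rewrite e_sym.
have xu0 : e x u0 by rewrite e_sym.
have yv : ~~ e y v by rewrite e_sym.
have yu : ~~ e y u by rewrite e_sym.
have xv : ~~ e x v by rewrite e_sym.
have xu : ~~ e x u by rewrite e_sym.
by have := far_edge_nonadj e_sym e_irr P5F K3F yx xu0 vu yv yu xv xu; rewrite e_sym vu0.
Qed.

Lemma max_deg_nbr (S : {set T}) (v x y : T) : x \in S -> y \in S -> e x y -> ~~ e v y ->
  (forall w, w \in S -> deg e S w <= deg e S v)%N ->
  (forall u, u \in S -> e v u -> e u x || e u y) ->
  exists2 u, u \in S & e v u && e u y.
Proof.
move=> xS yS xy vy vmax cover.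
have [/exists_inP [u uS vuy]|none] := boolP [exists u in S, e v u && e u y]; first by exists u.
have : [set w in S | e v w] \proper [set w in S | e x w].
  apply/properP; split; last by exists y; rewrite !inE ?yS ?xy // (negbTE vy) andbF.
  apply/subsetP => w; rewrite !inE => /andP [wS vw]; rewrite wS /=.
  have /orP [wx|wy] := cover w wS vw; first by rewrite e_sym.
  by move/exists_inPn: none => /(_ w wS); rewrite vw wy.
by move=> /proper_card; rewrite ltnNge vmax.
Qed.

Lemma far_from_separated_component (H B : {set T}) (x y u0 u2 : T) :
  x \in H -> y \in H -> e x y -> e u0 x -> e y u2 -> isK2 e B || isC5 e B ->
  separated e H B -> forall t, t \in B -> ~~ e u0 t && ~~ e u2 t.
Proof.
move=> xH yH xy u0x yu2 hB /separatedP sHB t tB.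
have [t' t'B tt'] := component_nbr hB tB.
have [/andP[_ xt] /andP[_ xt']] := (sHB x t xH tB, sHB x t' xH t'B).
have [/andP[_ yt] /andP[_ yt']] := (sHB y t yH tB, sHB y t' yH t'B).
have yx : e y x by rewrite e_sym.
have xu0 : e x u0 by rewrite e_sym.
by rewrite (far_edge_nonadj e_sym e_irr P5F K3F yx xu0 tt' yt yt' xt xt')
           (far_edge_nonadj e_sym e_irr P5F K3F xy yu2 tt' xt xt' yt yt').
Qed.

Section Grow.
Variables (S : {set T}) (v : T) (P : {set {set T}}).
Hypotheses (vS : v \in S) (vmax : forall w, w \in S -> (deg e S w <= deg e S v)%N).
Hypotheses (aP : admissible e P) (sP : forall A, A \in P -> A \subset nonnbr e S v).

Lemma member_nonnbr A t : A \in P -> t \in A -> [&& t \in S, t != v & ~~ e v t].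
Proof. by move=> AP /(subsetP (sP AP)); rewrite inE. Qed.

Lemma nbr_notin_member A u : A \in P -> e v u -> u \notin A.
Proof. by move=> AP vu; apply/negP => /(member_nonnbr AP) /and3P [_ _]; rewrite vu. Qed.

Lemma members_in_S : forall A, A \in P -> A \subset S.
Proof. by move=> A AP; apply/subsetP => t /(member_nonnbr AP) /and3P []. Qed.

Lemma grow_by_edge u : u \in S -> e v u -> (forall A t, A \in P -> t \in A -> ~~ e u t) ->
  exists2 P', packing_in e S P' & weight e P' = (weight e P).+1.
Proof.
move=> uS vu hu; have hK : isK2 e [set v; u] by apply/isK2P; exists v, u; rewrite (edge_neq e_irr vu).
exists ([set v; u] |: P); last first.
  by apply: weightU1_K2 => //; apply/negP => /nbr_notin_member /(_ vu); rewrite !inE eqxx orbT.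
apply/andP; split.
  apply: admissibleU1 => // [|B BP]; first by rewrite hK.
  apply/separatedP => x y; rewrite !inE => /orP [/eqP ->|/eqP ->] yB.
    by case/and3P: (member_nonnbr BP yB) => _ yv ->; rewrite eq_sym yv.
  by rewrite (hu B) // andbT; apply: contraTneq yB => <-; exact: nbr_notin_member.
apply/forall_inP => A; rewrite in_setU1 => /orP [/eqP ->|/members_in_S //].
by rewrite subUset !sub1set vS uS.
Qed.

Lemma grow_by_pentagon u0 H x : u0 \in S -> e v u0 -> H \in P -> x \in H -> e u0 x ->
  exists2 P', packing_in e S P' & weight e P' = (weight e P).+1.
Proof.
move=> u0S vu0 HP xH u0x; have /admissibleP [hk hs] := aP.
have vH h : h \in H -> ~~ e v h by case/(member_nonnbr HP)/and3P.
have hK : isK2 e H.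
  by case/orP: (hk H HP) => // hC; case: (C5_no_pendant_P2 hC xH u0x vu0 vH).
have [y yH xy] := component_nbr (hk H HP) xH.
have [xS _ vx] := and3P (member_nonnbr HP xH).
have [yS _ vy] := and3P (member_nonnbr HP yH).
have [u2 u2S /andP [vu2 u2y]] :=
  max_deg_nbr xS yS xy vy vmax (fun u _ => K2_nbr_cover vu0 u0x xy vx vy).
pose C := [set w | w \in [:: v; u0; x; y; u2]].
have hC : isC5 e C by apply: isC5_of_walk => //; rewrite e_sym.
have CP : C \notin P.
  have vC : v \in C by rewrite inE mem_head.
  by apply/negP => /member_nonnbr/(_ vC)/and3P[_ /eqP].
have sepC B : B \in P :\ H -> separated e C B.
  rewrite in_setD1 => /andP [BH BP]; apply/separatedP => w t wC tB.
  have HB : H != B by rewrite eq_sym.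
  have sHB := hs H B HP BP HB.
  have yu2 : e y u2 by rewrite e_sym.
  have /andP [u0t u2t] := far_from_separated_component xH yH xy u0x yu2 (hk B BP) sHB tB.
  have nbr_t u : e v u -> (u != t) by move=> vu; apply: contraTneq tB => <-; exact: nbr_notin_member.
  move: wC; rewrite !inE => /orP [|/orP [|/orP [|/orP []]]] /eqP ->.
  - by case/and3P: (member_nonnbr BP tB) => _ tv ->; rewrite eq_sym tv.
  - by rewrite nbr_t.
  - exact: (elimT (separatedP e H B) sHB x t xH tB).
  - exact: (elimT (separatedP e H B) sHB y t yH tB).
  - by rewrite nbr_t.
exists (C |: (P :\ H)); last exact: weight_swap_K2_C5.
apply/andP; split.
  by apply: admissibleU1 (admissible_sub (subD1set P H) aP) _ sepC; rewrite hC orbT.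
apply/forall_inP => A; rewrite in_setU1 => /orP [/eqP ->|]; last first.
  by rewrite in_setD1 => /andP [_ /members_in_S].
by apply/subsetP => w; rewrite !inE => /orP [|/orP [|/orP [|/orP []]]] /eqP ->.
Qed.

Lemma grow : (exists2 u, u \in S & e v u) ->
  exists2 P', packing_in e S P' & weight e P' = (weight e P).+1.
Proof.
case=> u0 u0S vu0.
have [/exists_inP [u uS /andP [vu hu]]|] :=
  boolP [exists u in S, e v u && [forall A in P, forall t in A, ~~ e u t]].
  by apply: (grow_by_edge uS vu) => A t AP tA; exact: (forall_inP (forall_inP hu A AP) t tA).
move=> /exists_inPn /(_ u0 u0S); rewrite vu0 /= => /forall_inPn [H HP /forall_inPn [x xH]].
by rewrite negbK => u0x; exact: grow_by_pentagon u0S vu0 HP xH u0x.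
Qed.

End Grow.

Lemma triangle_P5_free_max_weight_drops : max_weight_drops e.
Proof.
move=> S v vS hu vmax.
have ne : (0 < #|[pred P | packing_in e (nonnbr e S v) P]|)%N.
  by apply/card_gt0P; exists set0; exact: packing_in0.
have [P /andP [aP /forall_inP sP] PW] := eq_bigmax_cond (weight e) ne.
rewrite /max_weight PW.
have [P' hP' <-] := grow vS vmax aP sP hu.
exact: leq_bigmax_cond.
Qed.

End Growth.

Section Regularity.
Variables (T : finType) (e : rel T) (F : fieldType).
Hypotheses (e_sym : symmetric e) (e_irr : irreflexive e).

Lemma seq_weight_enum (P : {set {set T}}) : admissible e P -> seq_weight e (enum P) = weight e P.
Proof.
case/admissibleP => hk _; rewrite /seq_weight big_enum /= (bigID (isK2 e)) /= /weight mulnC.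
congr (_ + _).
  by rewrite -sum1_card; apply: eq_big => [A|A /andP[_ ->]]; rewrite ?inE.
rewrite -sum_nat_const; apply: eq_big => [A|A /andP[_ /negbTE ->]] //.
rewrite inE; case AP: (A \in P) => //=.
case/orP: (hk A AP) => [hK|hC]; first by rewrite hK (negbTE (K2_notC5 hK)).
by rewrite hC; apply/negP => /K2_notC5; rewrite hC.
Qed.

Lemma max_weight_le_reg : (\max_(P | admissible e P) weight e P <= reg e F)%N.
Proof.
apply/bigmax_leqP => P aP; have /admissibleP [hk hs] := aP.
have hall : all (fun H => isK2 e H || isC5 e H) (enum P).
  by apply/allP => A; rewrite mem_enum; exact: hk.
have hpw : pairwise (separated e) (enum P).
  apply: (@sub_in_pairwise _ (mem P) [rel A B | A != B]); last by rewrite -uniq_pairwise enum_uniq.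
    by move=> A B AP BP; exact: hs.
  by apply/allP => A; rewrite mem_enum.
have [z [hz cz [A0 zA0]]] := nontrivial_cycle_of_family e_sym e_irr F hall hpw.
rewrite seq_weight_enum // in hz.
have hb : betti e F (\bigcup_(H <- enum P) H) (weight e P) != 0%N.
  apply: betti_neq0 hz cz zA0 _ => A sA iA.
  by rewrite -seq_weight_enum //; exact: indep_le_seq_weight.
have hlt : (weight e P < #|T|.+2)%N.
  by have /facesP [_ _ <-] := hz _ zA0; apply: leq_trans (max_card _) _.
apply: (@leq_bigmax_cond _ _ (fun j : 'I_#|T|.+2 => nat_of_ord j) (Ordinal hlt)).
by apply/existsP; exists (\bigcup_(H <- enum P) H).
Qed.

Lemma reg_le_max_weight :
  max_weight_drops e -> (reg e F <= \max_(P | admissible e P) weight e P)%N.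
Proof.
move=> drop; apply/bigmax_leqP => -[[|k] hk] /= /existsP [S hS] //.
rewrite leqNgt; apply: contra hS => hlt.
rewrite (betti_eq0 (cycles_bound_above (F := F) e_sym e_irr drop _)) //.
apply: leq_ltn_trans hlt; apply/bigmax_leqP => P /andP [aP _].
exact: leq_bigmax_cond.
Qed.

End Regularity.

Theorem mainTheorem5 (F : fieldType) (T : finType) (e : rel T)
  (e_sym : symmetric e) (e_irr : irreflexive e)
  (hT : triangle_free e) (hP : P5_free e) :
  reg e F = \max_(P : {set {set T}} | admissible e P) weight e P.
Proof.
apply/eqP; rewrite eqn_leq max_weight_le_reg // andbT.
exact: reg_le_max_weight (triangle_P5_free_max_weight_drops e_sym e_irr hT hP).
Qed.
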